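(* Let $(X_k)$ be a Markov chain on a finite state space $E$ with irreducible, aperiodic transition matrix $P$, reversible with respect to its stationary distribution $\pi$, started from $\pi$. Let $\lambda$ be the second largest eigenvalue of $P$, $\lambda_0=\max(0,\lambda)$, and let $f:E\to\mathbb R$ with $\min f(E)=0$, $\max f(E)=1$, $\mu=\mathbb E_\pi f(X_k)$, $S_n=\sum_{k=1}^nf(X_k)$. Let $D=\mathrm{diag}(\sqrt{\pi_i})$, $D_t=\mathrm{diag}(e^{tf(i)/2})$, $\gamma_1=(\sqrt{\pi_i})_{i\in E}$, $G_t=D_tDPD^{-1}D_t$, $H_t=D_t[\lambda_0I+(1-\lambda_0)\gamma_1\gamma_1']D_t$, and let $\zeta(t)$ and $\eta(t)$ be the largest eigenvalues of $G_t$ and $H_t$ respectively. Then for every $\varepsilon>0$, $n\ge1$ and $t\ge0$, $$\mathbb P_\pi[S_n\ge n(\mu+\varepsilon)]\le\|D_t\gamma_1\|^2\zeta(t)^{-1}\exp\{-n[t(\mu+\varepsilon)-\log\zeta(t)]\}\le\|D_t\gamma_1\|^2\eta(t)^{-1}\exp\{-n[t(\mu+\varepsilon)-\log\eta(t)]\},$$ and furthermore $$\mathbb P_\pi[S_n\ge n(\mu+\varepsilon)]\le\exp\{-n[t(\mu+\varepsilon)-\log\eta(t)]\}.$$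
   Context: Reversibility means $\pi_ip_{ij}=\pi_jp_{ji}$ for all $i,j$; then all eigenvalues of $P$ are real, listed as $1=\lambda_1>\lambda_2\ge\cdots$ with multiplicity, and the second largest eigenvalue is $\lambda=\lambda_2$. Diagonal matrices and vectors are indexed by the states of $E$ in a fixed order. $\|\cdot\|$ is the Euclidean norm. Note $DPD^{-1}$ is symmetric, so $G_t$ and $H_t$ are symmetric. *)

From HB Require Import structures.
From mathcomp Require Import all_boot all_order all_algebra.
From mathcomp Require Import all_classical all_reals all_analysis.
Set Implicit Arguments. Unset Strict Implicit. Unset Printing Implicit Defensive.
Import Order.TTheory GRing.Theory Num.Theory.
Local Open Scope ring_scope.

Section MarkovDefs.
Variable R : realType.
Variable N : nat.
Implicit Types (P : 'M[R]_N) (pi : 'rV[R]_N).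

Definition stochastic P :=
  (forall i j, 0 <= P i j) /\ (forall i, \sum_j P i j = 1).

Definition stationary_distribution P pi :=
  (forall i, 0 <= pi 0 i) /\ \sum_i pi 0 i = 1 /\ pi *m P = pi.

Definition irreducible P := forall i j, exists m : nat, 0 < (P ^+ m) i j.

(* every state has period 1: the gcd of its return times is 1 *)
Definition aperiodic P :=
  forall i (d : nat),
    (forall m : nat, (0 < m)%N -> 0 < (P ^+ m) i i -> (d %| m)%N) -> d = 1%N.

Definition reversible P pi := forall i j, pi 0 i * P i j = pi 0 j * P j i.

Definition sorted_eigenvalues P (s : seq R) :=
  char_poly P = \prod_(x <- s) ('X - x%:P) /\ sorted (>=%R) s.

Definition largest_eigenvalue (A : 'M[R]_N) (z : R) :=
  eigenvalue A z /\ (forall w, eigenvalue A w -> w <= z).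

Definition vnorm (v : 'cV[R]_N) : R := Num.sqrt (\sum_i v i 0 ^+ 2).

(* Law of the chain (X_0, ..., X_k) started from pi: weight of a path *)
Definition path_weight P pi (k : nat) (x : {ffun 'I_k.+1 -> 'I_N}) : R :=
  pi 0 (x ord0) * \prod_(j < k) P (x (inord j)) (x (inord j.+1)).

Definition chain_prob P pi (k : nat) (A : pred {ffun 'I_k.+1 -> 'I_N}) : R :=
  \sum_(x | A x) path_weight P pi x.

Definition partial_sum (f : 'I_N -> R) (k : nat) (x : {ffun 'I_k.+1 -> 'I_N}) : R :=
  \sum_(j < k) f (x (inord j.+1)).

Definition sqrt_diag pi : 'M[R]_N := diag_mx (\row_i Num.sqrt (pi 0 i)).
Definition gamma1 pi : 'cV[R]_N := \col_i Num.sqrt (pi 0 i).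
Definition Dt (f : 'I_N -> R) (t : R) : 'M[R]_N := diag_mx (\row_i expR (t * f i / 2)).

Definition Gt P pi f t : 'M[R]_N :=
  Dt f t *m sqrt_diag pi *m P *m invmx (sqrt_diag pi) *m Dt f t.

Definition Ht pi f t (lam0 : R) : 'M[R]_N :=
  Dt f t *m (lam0%:M + (1 - lam0) *: (gamma1 pi *m (gamma1 pi)^T)) *m Dt f t.

End MarkovDefs.

From HB Require Import structures.
From mathcomp Require Import all_boot all_order all_algebra.
From mathcomp Require Import all_classical all_reals all_analysis.
From mathcomp Require Import ring lra.
Import Order.TTheory GRing.Theory Num.Theory.
Import numFieldNormedType.Exports.
Set Implicit Arguments. Unset Strict Implicit. Unset Printing Implicit Defensive.
Local Open Scope ring_scope.

(* Let D and D_t be as in the statement and u = γ1' D_t, so that |u|^2 = ‖D_t γ1‖^2.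
   Conjugating the tilted chain P D_t^2 by D gives E_π[exp(t S_n)] = u G_t^(n-1) u', and
   Markov's inequality turns this moment into the tail bound. Reversibility makes G_t
   symmetric and its entries are nonnegative, so |x G_t x'| <= ζ(t) |x|^2 and, splitting
   even and odd powers, x G_t^m x' <= ζ(t)^m |x|^2. This yields the first inequality.
   On the orthogonal complement of γ1 the quadratic form of D P D^-1 is at most λ0 |x|^2:
   its top eigenvalue there is an eigenvalue of P other than the Perron eigenvalue 1,
   hence at most λ. Therefore G_t <= H_t as quadratic forms, which gives ζ(t) <= η(t);
   testing H_t on u gives |u|^2 <= η(t), which absorbs the prefactor in the last bound. *)

Section BilinearForm.
Variables (R : realFieldType) (n : nat).
Implicit Types (S : 'M[R]_n) (x y z : 'rV[R]_n).

Definition bform S x y : R := (x *m S *m y^T) 0 0.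
Definition sqnorm x : R := (x *m x^T) 0 0.

Lemma bformE S x y : bform S x y = \sum_i \sum_j x 0 i * S i j * y 0 j.
Proof.
rewrite /bform mxE; under eq_bigr do rewrite !mxE big_distrl /=.
by rewrite exchange_big.
Qed.

Lemma sqnormE x : sqnorm x = \sum_i x 0 i ^+ 2.
Proof. by rewrite /sqnorm mxE; apply: eq_bigr => i _; rewrite mxE expr2. Qed.

Lemma sqnorm_ge0 x : 0 <= sqnorm x.
Proof. by rewrite sqnormE sumr_ge0 // => i _; rewrite sqr_ge0. Qed.

Lemma sqnorm_eq0 x : (sqnorm x == 0) = (x == 0).
Proof.
apply/idP/eqP => [|->]; last by rewrite /sqnorm mul0mx mxE.
rewrite sqnormE psumr_eq0 => [/allP x0|i _]; last exact: sqr_ge0.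
apply/rowP => i; rewrite mxE; apply/eqP; rewrite -sqrf_eq0.
exact: x0 (mem_index_enum _).
Qed.

Lemma sqnorm_gt0 x : x != 0 -> 0 < sqnorm x.
Proof. by rewrite -sqnorm_eq0 lt0r sqnorm_ge0 andbT. Qed.

Lemma bform1 x y : bform 1%:M x y = (x *m y^T) 0 0.
Proof. by rewrite /bform mulmx1. Qed.

Lemma bform_scalar a x y : bform a%:M x y = a * (x *m y^T) 0 0.
Proof. by rewrite /bform mul_mx_scalar -scalemxAl mxE. Qed.

Lemma bformZl S a x y : bform S (a *: x) y = a * bform S x y.
Proof. by rewrite /bform -!scalemxAl mxE. Qed.

Lemma bformZr S a x y : bform S x (a *: y) = a * bform S x y.
Proof. by rewrite /bform linearZ -scalemxAr mxE. Qed.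

Lemma bformDl S x y z : bform S (x + y) z = bform S x z + bform S y z.
Proof. by rewrite /bform !mulmxDl mxE. Qed.

Lemma bformDr S x y z : bform S x (y + z) = bform S x y + bform S x z.
Proof. by rewrite /bform linearD mulmxDr mxE. Qed.

Lemma bformDm S1 S2 x y : bform (S1 + S2) x y = bform S1 x y + bform S2 x y.
Proof. by rewrite /bform mulmxDr mulmxDl mxE. Qed.

Lemma bformBm S1 S2 x y : bform (S1 - S2) x y = bform S1 x y - bform S2 x y.
Proof. by rewrite /bform mulmxBr mulmxBl [LHS]mxE [X in _ + X = _]mxE. Qed.

Lemma bformZm a S x y : bform (a *: S) x y = a * bform S x y.
Proof. by rewrite /bform -scalemxAr -scalemxAl mxE. Qed.

Lemma bform_rank1 (a b : 'rV[R]_n) x y :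
  bform (a^T *m b) x y = (x *m a^T) 0 0 * (b *m y^T) 0 0.
Proof. by rewrite /bform mulmxA -mulmxA mxE big_ord1. Qed.

Lemma bform_conj_sym (T : 'M[R]_n) S x y : T^T = T ->
  bform (T *m S *m T) x y = bform S (x *m T) (y *m T).
Proof. by move=> TT; rewrite /bform trmx_mul TT !mulmxA. Qed.

Lemma bformC S x y : S^T = S -> bform S x y = bform S y x.
Proof.
move=> SC; rewrite /bform; transitivity ((y *m S *m x^T)^T 0 0); last by rewrite mxE.
by rewrite !trmx_mul trmxK SC mulmxA.
Qed.

Lemma bform_expand S a x y :
  bform S (x + a *: y) (x + a *: y) =
  bform S x x + a * bform S x y + a * bform S y x + a * a * bform S y y.
Proof. rewrite !(bformDl, bformDr, bformZl, bformZr); ring. Qed.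

Lemma sqnorm_bform x : sqnorm x = bform 1%:M x x.
Proof. by rewrite bform1. Qed.

Lemma sqnorm_proj_le (g y : 'rV[R]_n) :
  sqnorm g = 1 -> ((y *m g^T) 0 0) ^+ 2 <= sqnorm y.
Proof.
move=> g1; set a := (y *m g^T) 0 0.
have := sqnorm_ge0 (y + (- a) *: g); rewrite !sqnorm_bform bform_expand -!sqnorm_bform g1.
by rewrite (bformC g y (tr_scalar_mx _ _)) bform1 -/a; nra.
Qed.

End BilinearForm.

Section Rayleigh.
Variables (R : realType) (n : nat).
Implicit Types (S : 'M[R]_n) (x : 'rV[R]_n).

Lemma continuous_bform S : continuous (fun x => bform S x x).
Proof.
under eq_fun do rewrite bformE.
apply: continuous_big => [|i _]; first exact: add_continuous.
apply: continuous_big => [|j _]; first exact: add_continuous.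
move=> x; apply: (@continuousM _ _ (fun y : 'rV[R]_n => y 0 i * S i j) (fun y => y 0 j));
  last exact: coord_continuous.
by apply: (@continuousM _ _ (fun y : 'rV[R]_n => y 0 i) (fun=> S i j));
  [exact: coord_continuous|exact: cst_continuous].
Qed.

Lemma continuous_sqnorm : continuous (@sqnorm R n).
Proof.
have -> : @sqnorm R n = fun x => bform 1%:M x x.
  by apply/funext => x; rewrite sqnorm_bform.
exact: continuous_bform.
Qed.

Lemma compact_unit_sphere : compact [set x : 'rV[R]_n | sqnorm x = 1]%classic.
Proof.
apply: (subclosed_compact _ (rV_compact (fun=> @segment_compact R (-1) 1))).
  have -> : [set x : 'rV[R]_n | sqnorm x = 1]%classic = (@sqnorm R n @^-1` [set 1])%classic by [].
  by move: continuous_sqnorm => /continuous_closedP; apply; exact: closed_eq.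
move=> x /= x1 i; rewrite /= in_itv /= -ler_norml -(expr_le1 (n := 2)) // ?normr_ge0 //.
rewrite real_normK ?num_real // -x1 sqnormE (bigD1 i) //= lerDl.
by apply: sumr_ge0 => j _; exact: sqr_ge0.
Qed.

Lemma bform_le_max S : (0 < n)%N ->
  exists2 c, sqnorm c = 1 & forall x, bform S x x <= bform S c c * sqnorm x.
Proof.
move=> n_gt0.
have sphere0 : ([set x : 'rV[R]_n | sqnorm x = 1] !=set0)%classic.
  exists (delta_mx 0 (Ordinal n_gt0)); rewrite /= sqnormE (bigD1 (Ordinal n_gt0)) //=.
  by rewrite big1 ?mxE ?eqxx ?addr0 ?expr1n // => i /negbTE ni; rewrite mxE ni andbF expr0n.
have [c /[1!inE] c1 cmax] := compact_EVT_max sphere0 compact_unit_sphere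
  (continuous_subspaceT (@continuous_bform S)).
exists c => // x; have [->|x0] := eqVneq x 0; first by rewrite /bform /sqnorm !mul0mx !mxE mulr0.
have nx := sqnorm_gt0 x0; pose a := (Num.sqrt (sqnorm x))^-1.
have a2 : a * a = (sqnorm x)^-1 by rewrite -expr2 exprVn sqr_sqrtr ?ltW.
have : bform S (a *: x) (a *: x) <= bform S c c.
  by apply: cmax; rewrite inE /= sqnorm_bform bformZl bformZr mulrA a2 -sqnorm_bform mulVf ?gt_eqF.
rewrite bformZl bformZr mulrA a2 => h.
by rewrite -(@ler_pM2l _ (sqnorm x)^-1) ?invr_gt0 // mulrCA mulVf ?gt_eqF ?mulr1.
Qed.

Lemma psd_bform_eq0 S c : S^T = S -> (forall x, 0 <= bform S x x) ->
  bform S c c = 0 -> c *m S = 0.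
Proof.
move=> SC S_ge0 Scc; suff Sxc x : bform S x c = 0.
  apply/rowP => j; have := Sxc 'e_j; rewrite bformC // /bform trmx_delta -colE.
  by rewrite mxE => ->; rewrite mxE.
set a := bform S x c; set d := bform S x x.
have d1 : d + 1 != 0 by rewrite lt0r_neq0 // ltr_wpDl ?S_ge0.
have := S_ge0 (c + (- a / (d + 1)) *: x).
rewrite bform_expand bformC // -/a -/d Scc.
have -> : 0 + - a / (d + 1) * a + - a / (d + 1) * a + - a / (d + 1) * (- a / (d + 1)) * d
   = - (a ^+ 2 * ((d + 2) / (d + 1) ^+ 2)) by field.
rewrite oppr_ge0 pmulr_lle0 ?divr_gt0 ?exprn_gt0 ?ltr_wpDl ?S_ge0 //.
by move=> a2; apply/eqP; rewrite -sqrf_eq0 eq_le a2 sqr_ge0.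
Qed.

Lemma rayleigh S : (0 < n)%N -> S^T = S ->
  exists m, (exists2 w : 'rV_n, w *m S = m *: w & w != 0) /\
    forall x, bform S x x <= m * sqnorm x.
Proof.
move=> n_gt0 SC; have [c c1 cmax] := bform_le_max S n_gt0.
exists (bform S c c); split=> //; exists c; last by rewrite -sqnorm_eq0 c1 oner_eq0.
have : c *m ((bform S c c)%:M - S) = 0.
  apply: psd_bform_eq0 => [|x|].
  - by rewrite linearB /= tr_scalar_mx SC.
  - by rewrite bformBm bform_scalar subr_ge0.
  - by rewrite bformBm bform_scalar -/(sqnorm c) c1 mulr1 subrr.
by rewrite mulmxBr mul_mx_scalar => /eqP; rewrite subr_eq0 eq_sym => /eqP.
Qed.

End Rayleigh.

Section SymmetricBounds.
Variables (R : realType) (n : nat).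
Implicit Types (S : 'M[R]_n) (x : 'rV[R]_n).

Lemma bform_le_largest_eigenvalue S z : (0 < n)%N -> S^T = S ->
  largest_eigenvalue S z -> forall x, bform S x x <= z * sqnorm x.
Proof.
move=> n_gt0 SC [_ z_max] x.
have [m [[w wS w0] m_max]] := rayleigh n_gt0 SC.
have mz : m <= z by apply: z_max; apply/eigenvalueP; exists w.
by apply: le_trans (m_max x) _; rewrite ler_wpM2r ?sqnorm_ge0.
Qed.

Lemma bform_lower_bound_nonneg_mx S z : (forall i j, 0 <= S i j) ->
  (forall x, bform S x x <= z * sqnorm x) -> forall x, - (z * sqnorm x) <= bform S x x.
Proof.
move=> S_ge0 S_le x; pose ax := \row_i `|x 0 i|.
have nax : sqnorm ax = sqnorm x.
  by rewrite !sqnormE; apply: eq_bigr => i _; rewrite mxE real_normK ?num_real.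
apply: le_trans (_ : - bform S ax ax <= _); first by rewrite lerN2 -nax S_le.
rewrite !bformE -sumrN; apply: ler_sum => i _; rewrite -sumrN; apply: ler_sum => j _.
by apply: lerNnormlW; rewrite !mxE !normrM (ger0_norm (S_ge0 i j)).
Qed.

Variables (S : 'M[R]_n) (z : R).
Hypotheses (SC : S^T = S) (z_gt0 : 0 < z).
Hypotheses (S_le : forall x, bform S x x <= z * sqnorm x)
           (S_ge : forall x, - (z * sqnorm x) <= bform S x x).

(* Polarization: apply both bounds to [z x + x S] and [z x - x S]. *)
Lemma sqnorm_mulmx_le x : sqnorm (x *m S) <= z ^+ 2 * sqnorm x.
Proof.
set y := x *m S; set u := z *: x.
have h1 := S_le (u + 1 *: y); have h2 := S_ge (u + (-1) *: y).
rewrite !sqnorm_bform !bform_expand (bformC y u SC) (bformC y u (tr_scalar_mx _ _)) in h1 h2.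
have Suy : bform S u y = z * sqnorm y by rewrite /u bformZl /bform /y.
have nu : bform 1%:M u u = z ^+ 2 * sqnorm x by rewrite /u bformZl bformZr -sqnorm_bform; ring.
rewrite Suy nu -!sqnorm_bform in h1 h2.
rewrite -(ler_pM2l z_gt0); have := sqnorm_ge0 x; have := sqnorm_ge0 y.
move: (bform 1%:M u y) (bform S u u) (bform S y y) h1 h2 => a b c h1 h2; nra.
Qed.

Lemma sqnorm_mulmx_exp_le m x : sqnorm (x *m S ^+ m) <= (z ^+ 2) ^+ m * sqnorm x.
Proof.
elim: m x => [|m IH] x; first by rewrite expr0 mulmx1 expr0 mul1r.
rewrite exprSr -mulmxE mulmxA; apply: le_trans (sqnorm_mulmx_le _) _.
by rewrite [_ ^+ m.+1]exprS -mulrA ler_wpM2l ?sqr_ge0.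
Qed.

Lemma trmx_exp m : (S ^+ m)^T = S ^+ m.
Proof.
elim: m => [|m IH]; first by rewrite expr0 tr_scalar_mx.
by rewrite [in LHS]exprS trmx_mul IH SC exprSr.
Qed.

(* Split [S ^+ m] as [S ^+ k S ^+ k] or [S ^+ k S S ^+ k] with [k = m / 2]. *)
Lemma bform_exp_le m x : bform (S ^+ m) x x <= z ^+ m * sqnorm x.
Proof.
rewrite -(odd_double_half m); set k := m./2; set y := x *m S ^+ k.
have Sk_congr T : bform (S ^+ k *m T *m S ^+ k) x x = bform T y y.
  by rewrite bform_conj_sym ?trmx_exp.
have z2k : z ^+ k.*2 = (z ^+ 2) ^+ k by rewrite -exprM mul2n.
case: (odd m) => /=.
  have -> : S ^+ (1 + k.*2)%N = S ^+ k *m S *m S ^+ k.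
    by rewrite -addnn addnCA !exprD expr1 !mulmxE mulrA.
  rewrite Sk_congr exprD expr1 z2k; apply: le_trans (S_le _) _.
  by rewrite -mulrA; apply: ler_wpM2l; [exact: ltW|exact: sqnorm_mulmx_exp_le].
have -> : S ^+ (0 + k.*2)%N = S ^+ k *m 1%:M *m S ^+ k by rewrite mulmx1 add0n -addnn exprD.
by rewrite Sk_congr add0n z2k -sqnorm_bform; exact: sqnorm_mulmx_exp_le.
Qed.

End SymmetricBounds.

Lemma ler_sum_term (R : numDomainType) (I : finType) (F : I -> R) j :
  (forall i, 0 <= F i) -> F j <= \sum_i F i.
Proof. by move=> F_ge0; rewrite (bigD1 j) //= lerDl sumr_ge0. Qed.

Lemma sorted_ge_nth1 (R : realDomainType) (s : seq R) x y :
  sorted >=%R s -> x \in s -> y \in s -> x < y -> x <= s`_1.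
Proof.
move=> s_sorted xs ys xy.
have ge_trans : transitive (>=%R : rel R) by move=> a b c ba cb; exact: le_trans cb ba.
have s_nth := sorted_leq_nth ge_trans (@lexx _ _) 0 s_sorted.
have ix : (index x s < size s)%N by rewrite index_mem.
have iy : (index y s < size s)%N by rewrite index_mem.
have [ix0|ix_gt0] := posnP (index x s).
  have := s_nth 0%N (index y s) (leq_ltn_trans (leq0n _) ix) iy (leq0n _).
  by rewrite -ix0 !nth_index // => yx; have := lt_le_trans xy yx; rewrite ltxx.
by have := s_nth 1%N (index x s) (leq_ltn_trans ix_gt0 ix) ix ix_gt0; rewrite nth_index.
Qed.

Lemma mulmx_exp_conj (R : pzRingType) n (X Y Z : 'M[R]_n) :
  X *m Y = 1%:M -> Y *m X = 1%:M -> forall m, X *m Z ^+ m *m Y = (X *m Z *m Y) ^+ m.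
Proof.
move=> XY YX; elim=> [|m IH]; first by rewrite !expr0 mulmx1 XY.
rewrite exprS [in RHS]exprS -IH -!mulmxE -[X *m Z *m Y *m _]mulmxA !mulmxA.
by rewrite -[X *m Z *m Y *m X]mulmxA YX mulmx1.
Qed.

Lemma mulmx_expS_swap (R : pzRingType) n (A B : 'M[R]_n) m :
  (A *m B) ^+ m.+1 = A *m (B *m A) ^+ m *m B.
Proof.
elim: m => [|m IH]; first by rewrite expr1 expr0 mulmx1.
by rewrite exprS IH [in RHS]exprS -!mulmxE !mulmxA.
Qed.

Lemma markov_exp_sum (R : realType) (T : finType) (w S : T -> R) K t :
  (forall x, 0 <= w x) -> 0 <= t ->
  \sum_(x | K <= S x) w x <= (\sum_x w x * expR (t * S x)) * expR (- (t * K)).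
Proof.
move=> w_ge0 t_ge0; rewrite big_distrl /= [leRHS](bigID (fun x => K <= S x)) /=.
apply: ler_wpDr; first by apply: sumr_ge0 => x _; rewrite !mulr_ge0 ?expR_ge0.
apply: ler_sum => x KS; rewrite -mulrA -expRD -{1}(mulr1 (w x)) ler_wpM2l //.
by apply: le_trans (expR_ge1Dx _); rewrite lerDl -mulrBr mulr_ge0 ?subr_ge0.
Qed.

Lemma expR_rate (R : realType) n (z t b : R) : 0 < z ->
  expR (- (n%:R * (t * b - ln z))) = expR (- (t * (n%:R * b))) * z ^+ n.
Proof.
move=> z_gt0; rewrite -(lnK z_gt0) -expRM_natl -expRD expRK; congr expR; ring.
Qed.

Lemma chernoff_rate (R : realType) n (c z t b : R) : (0 < n)%N -> 0 < z ->
  c * z^-1 * expR (- (n%:R * (t * b - ln z))) = c * z ^+ n.-1 * expR (- (t * (n%:R * b))).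
Proof.
case: n => // n _ z_gt0; rewrite expR_rate // exprS /=.
by field; rewrite gt_eqF.
Qed.

Section Stochastic.
Variables (R : realType) (N : nat) (P : 'M[R]_N).
Hypothesis P_stoch : stochastic P.

Lemma stochastic_exp m : stochastic (P ^+ m).
Proof.
have [P_ge0 P_sum1] := P_stoch; elim: m => [|m [IH_ge0 IH_sum1]].
  split => [i j|i]; rewrite expr0; first by rewrite mxE ler0n.
  by rewrite (bigD1 i) //= mxE eqxx big1 ?addr0 // => j /negbTE; rewrite mxE eq_sym => ->.
split => [i j|i]; rewrite exprSr -mulmxE.
  by rewrite mxE sumr_ge0 // => k _; rewrite mulr_ge0.
under eq_bigr do rewrite mxE.
rewrite exchange_big /= -(IH_sum1 i); apply: eq_bigr => k _.
by rewrite -big_distrr /= P_sum1 mulr1.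
Qed.

Lemma stochastic_eigenvalue_le1 (h : 'I_N -> R) lam :
  (forall j, \sum_i P j i * h i = lam * h j) -> (exists i, h i != 0) -> `|lam| <= 1.
Proof.
have [P_ge0 P_sum1] := P_stoch; move=> hP [i0 hi0].
have [j0 _ j0_max] := @arg_maxP _ _ _ i0 xpredT (fun i => `|h i|) isT.
have hj0 : 0 < `|h j0| by apply: lt_le_trans (j0_max i0 isT); rewrite normr_gt0.
rewrite -(ler_pM2r hj0) mul1r -normrM -hP; apply: le_trans (ler_norm_sum _ _ _) _.
apply: le_trans (_ : \sum_i P j0 i * `|h j0| <= _).
  by apply: ler_sum => i _; rewrite normrM ger0_norm //; apply: ler_wpM2l => //; exact: j0_max.
by rewrite -big_distrl /= P_sum1 mul1r.
Qed.

Lemma harmonic_exp (h : 'I_N -> R) : (forall j, \sum_i P j i * h i = h j) ->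
  forall m j, \sum_i (P ^+ m) j i * h i = h j.
Proof.
move=> hP; elim=> [|m IH] j.
  rewrite expr0 (bigD1 j) //= mxE eqxx mulr1n mul1r big1 ?addr0 // => i /negbTE.
  by rewrite mxE eq_sym => ->; rewrite mulr0n mul0r.
rewrite exprSr -mulmxE; under eq_bigr do rewrite mxE big_distrl /=.
rewrite exchange_big /= -IH; apply: eq_bigr => k _.
by rewrite -hP big_distrr /=; apply: eq_bigr => i _; rewrite mulrA.
Qed.

(* Maximum principle: at a maximum of [h], averaging forces equality along every edge. *)
Lemma irreducible_harmonic_const (h : 'I_N -> R) : irreducible P ->
  (forall j, \sum_i P j i * h i = h j) -> forall i j, h i = h j.
Proof.
move=> P_irr hP.
suff h_max i0 j : (forall k, h k <= h i0) -> h j = h i0.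
  move=> i j; have [i0 _ i0_max] := @arg_maxP _ _ _ i xpredT h isT.
  by rewrite (h_max i0 i) ?(h_max i0 j) // => k; exact: i0_max.
move=> i0_max; have [m Pm_pos] := P_irr i0 j.
have [Pm_ge0 Pm_sum1] := stochastic_exp m.
have : \sum_i (P ^+ m) i0 i * (h i0 - h i) = 0.
  under eq_bigr do rewrite mulrBr.
  by rewrite sumrB -big_distrl /= Pm_sum1 mul1r harmonic_exp // subrr.
move=> sum0; have : (P ^+ m) i0 j * (h i0 - h j) <= 0.
  rewrite -sum0; apply: ler_sum_term => i.
  by rewrite mulr_ge0 // subr_ge0.
rewrite pmulr_rle0 // subr_le0 => hj.
by apply/eqP; rewrite eq_le i0_max hj.
Qed.

End Stochastic.

Lemma path_sum_mulmx (R : pzRingType) (N : nat) (Q : 'M[R]_N) k (a : 'rV[R]_N) (b : 'cV[R]_N) :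
  \sum_(x : {ffun 'I_k.+1 -> 'I_N})
     a 0 (x ord0) * (\prod_(j < k) Q (x (inord j)) (x (inord j.+1))) * b (x (inord k)) 0
  = (a *m Q ^+ k *m b) 0 0.
Proof.
elim: k a b => [|k IH] a b.
  rewrite expr0 mulmx1 mxE (reindex (fun i : 'I_N => [ffun _ : 'I_1 => i])) /=; last first.
    exists (fun x : {ffun 'I_1 -> 'I_N} => x ord0) => [i _|x _]; first by rewrite ffunE.
    by apply/ffunP => j; rewrite ffunE (ord1 j).
  by apply: eq_bigr => i _; rewrite !ffunE big_ord0 mulr1.
pose cons (p : 'I_N * {ffun 'I_k.+1 -> 'I_N}) : {ffun 'I_k.+2 -> 'I_N} :=
  [ffun i => if unlift ord0 i is Some j then p.2 j else p.1].
rewrite (reindex cons) /=; last first.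
  exists (fun x : {ffun 'I_k.+2 -> 'I_N} => (x ord0, [ffun j => x (lift ord0 j)])).
    move=> [i y] _ /=; congr (_, _); first by rewrite ffunE unlift_none.
    by apply/ffunP => j; rewrite !ffunE liftK.
  move=> x _; apply/ffunP => i; rewrite !ffunE.
  by case: unliftP => [j ->|->] //=; rewrite ffunE.
have cons0 p : cons p ord0 = p.1 by rewrite ffunE unlift_none.
have consS p j : (j < k.+1)%N -> cons p (inord j.+1) = p.2 (inord j).
  move=> jk; have -> : inord j.+1 = lift ord0 (inord j : 'I_k.+1).
    by apply: val_inj; rewrite /= /bump leq0n add1n !inordK.
  by rewrite ffunE liftK.
have inord0 m : (inord 0 : 'I_m.+1) = ord0 by apply: val_inj; rewrite /= inordK.
rewrite -(pair_big xpredT xpredT (fun i y => a 0 (cons (i, y) ord0) *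
   (\prod_(j < k.+1) Q (cons (i, y) (inord j)) (cons (i, y) (inord j.+1))) *
   b (cons (i, y) (inord k.+1)) 0)) /=.
rewrite exprS -mulmxA mxE; apply: eq_bigr => i _.
have -> : ((Q * Q ^+ k) *m b) i 0 = (row i Q *m Q ^+ k *m b) 0 0 by rewrite -!row_mul [RHS]mxE.
rewrite -IH big_distrr /=; apply: eq_bigr => y _.
rewrite big_ord_recl /= inord0 cons0 (consS (i, y) 0%N) //= inord0 (consS (i, y) k) //.
rewrite (eq_bigr (fun j : 'I_k => Q (y (inord j)) (y (inord j.+1)))); last first.
  move=> j _; rewrite /bump leq0n add1n (consS (i, y) j (ltnW (ltn_ord j))).
  by rewrite (consS (i, y) j.+1) //= ltnS ltn_ord.
by rewrite mxE /= !mulrA.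
Qed.

Section Tilting.
Variables (R : realType) (N : nat) (f : 'I_N -> R).

Lemma trmx_Dt t : (Dt f t)^T = Dt f t.
Proof. exact: tr_diag_mx. Qed.

Lemma Dt_sqr t : Dt f t *m Dt f t = diag_mx (\row_i expR (t * f i)).
Proof.
rewrite mulmx_diag; congr diag_mx; apply/rowP => i; rewrite !mxE -expRD.
by congr expR; field.
Qed.

Lemma DtN_mul t : Dt f (- t) *m Dt f t = 1%:M.
Proof.
rewrite mulmx_diag -diag_const_mx; congr diag_mx; apply/rowP => i; rewrite !mxE -expRD.
by rewrite !mulNr addNr expR0.
Qed.

End Tilting.

Lemma mem_sorted_eigenvalues (R : realType) N (P : 'M[R]_N) s x :
  sorted_eigenvalues P s -> eigenvalue P x -> x \in s.
Proof. by case=> P_char _; rewrite eigenvalue_root_char P_char root_prod_XsubC. Qed.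

Section ReversibleChain.
Variables (R : realType) (N : nat) (P : 'M[R]_N) (pi : 'rV[R]_N).
Hypotheses (P_stoch : stochastic P) (P_irr : irreducible P)
  (pi_stat : stationary_distribution P pi) (P_rev : reversible P pi).

Lemma pi_sum1 : \sum_i pi 0 i = 1.
Proof. by case: pi_stat => _ []. Qed.

Lemma stationary_eigenvalue1 : eigenvalue P 1.
Proof.
have [_ [_ piP]] := pi_stat; apply/eigenvalueP; exists pi; first by rewrite scale1r.
apply/eqP => pi0; move: pi_sum1; rewrite pi0 big1 => [/eqP|i _]; last by rewrite mxE.
by rewrite eq_sym oner_eq0.
Qed.

Lemma stationary_exp m : pi *m P ^+ m = pi.
Proof.
have [_ [_ piP]] := pi_stat.
by elim: m => [|m IH]; rewrite ?expr0 ?mulmx1 // exprSr -mulmxE mulmxA IH piP.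
Qed.

Lemma pi_gt0 i : 0 < pi 0 i.
Proof.
have [pi_ge0 _] := pi_stat.
have [j pij] : exists j, 0 < pi 0 j.
  apply/existsP; apply: contraT; rewrite negb_exists => /forallP pi_le0.
  have : \sum_i pi 0 i <= 0 by rewrite sumr_le0 // => k _; rewrite leNgt pi_le0.
  by rewrite pi_sum1 ler10.
have [m Pm_ji] := P_irr j i; have [Pm_ge0 _] := stochastic_exp P_stoch m.
rewrite -(stationary_exp m) mxE; apply: lt_le_trans (mulr_gt0 pij Pm_ji) _.
by apply: ler_sum_term => k; rewrite mulr_ge0.
Qed.

Definition sqrt_pi i := Num.sqrt (pi 0 i).
Definition rootpi : 'rV[R]_N := \row_i sqrt_pi i.

Lemma sqrt_pi_gt0 i : 0 < sqrt_pi i. Proof. by rewrite sqrtr_gt0 pi_gt0. Qed.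
Lemma sqrt_pi_neq0 i : sqrt_pi i != 0. Proof. by rewrite gt_eqF ?sqrt_pi_gt0. Qed.
Lemma sqr_sqrt_pi i : sqrt_pi i ^+ 2 = pi 0 i.
Proof. by rewrite sqr_sqrtr // ltW ?pi_gt0. Qed.

Lemma gamma1E : gamma1 pi = rootpi^T.
Proof. by apply/matrixP => i j; rewrite !mxE. Qed.

Lemma sqnorm_rootpi : sqnorm rootpi = 1.
Proof. by rewrite sqnormE -pi_sum1; apply: eq_bigr => i _; rewrite mxE sqr_sqrt_pi. Qed.

Lemma rootpi_mul_tr : rootpi *m rootpi^T = 1%:M.
Proof. by apply/matrixP => i j; rewrite !ord1 -/(sqnorm rootpi) sqnorm_rootpi mxE. Qed.

Definition inv_sqrt_diag : 'M[R]_N := diag_mx (\row_i (sqrt_pi i)^-1).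

Lemma sqrt_diagK : sqrt_diag pi *m inv_sqrt_diag = 1%:M.
Proof.
rewrite mulmx_diag; apply/matrixP => i j; rewrite !mxE.
by case: eqP => _; rewrite ?mulr1n ?mulr0n // -/(sqrt_pi i) mulfV ?sqrt_pi_neq0.
Qed.

Lemma inv_sqrt_diagK : inv_sqrt_diag *m sqrt_diag pi = 1%:M.
Proof. by rewrite diag_mxC sqrt_diagK. Qed.

Lemma invmx_sqrt_diag : invmx (sqrt_diag pi) = inv_sqrt_diag.
Proof.
have [Du _] := mulmx1_unit sqrt_diagK.
by rewrite -[RHS]mul1mx -(mulVmx Du) -mulmxA sqrt_diagK mulmx1.
Qed.

Definition Psym := sqrt_diag pi *m P *m invmx (sqrt_diag pi).

Lemma PsymE i j : Psym i j = sqrt_pi i * P i j / sqrt_pi j.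
Proof. by rewrite /Psym invmx_sqrt_diag mul_mx_diag mxE mul_diag_mx !mxE. Qed.

Lemma Psym_ge0 i j : 0 <= Psym i j.
Proof.
have [P_ge0 _] := P_stoch.
by rewrite PsymE !mulr_ge0 ?invr_ge0 ?P_ge0 // ltW ?sqrt_pi_gt0.
Qed.

(* Reversibility is exactly the symmetry of [D P D^-1]. *)
Lemma trmx_Psym : Psym^T = Psym.
Proof.
apply/matrixP => i j; rewrite mxE !PsymE.
have := P_rev i j; rewrite -!sqr_sqrt_pi => rev_ij.
have si := sqrt_pi_neq0 i; have sj := sqrt_pi_neq0 j.
apply/eqP; rewrite -subr_eq0.
have -> : sqrt_pi j * P j i / sqrt_pi i - sqrt_pi i * P i j / sqrt_pi j
   = (sqrt_pi j ^+ 2 * P j i - sqrt_pi i ^+ 2 * P i j) / (sqrt_pi i * sqrt_pi j).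
  by field; rewrite si sj.
by rewrite rev_ij subrr mul0r.
Qed.

Lemma rootpi_Psym : rootpi *m Psym = rootpi.
Proof.
have [_ [_ piP]] := pi_stat; apply/rowP => j; rewrite mxE.
rewrite (eq_bigr (fun k => pi 0 k * P k j / sqrt_pi j)) => [|k _]; last first.
  by rewrite mxE PsymE -sqr_sqrt_pi; ring.
rewrite -big_distrl /=; have := congr1 (fun v : 'rV_N => v 0 j) piP; rewrite mxE => ->.
by rewrite mxE -sqr_sqrt_pi expr2 -mulrA mulfV ?sqrt_pi_neq0 ?mulr1.
Qed.

Lemma Psym_rootpi : Psym *m rootpi^T = rootpi^T.
Proof. by rewrite -trmx_Psym -trmx_mul rootpi_Psym. Qed.

Lemma Psym_eigenvalue lam (w : 'rV_N) : w *m Psym = lam *: w -> w != 0 -> eigenvalue P lam.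
Proof.
move=> wP w0; apply/eigenvalueP; exists (w *m sqrt_diag pi).
  rewrite scalemxAl -wP /Psym invmx_sqrt_diag -!mulmxA.
  by rewrite inv_sqrt_diagK mulmx1.
apply: contra w0 => /eqP wD0; apply/eqP.
by rewrite -[w]mulmx1 -sqrt_diagK mulmxA wD0 mul0mx.
Qed.

Lemma Psym_eigen_harmonic lam (w : 'rV_N) : w *m Psym = lam *: w ->
  forall j, \sum_i P j i * (w 0 i / sqrt_pi i) = lam * (w 0 j / sqrt_pi j).
Proof.
move=> wP j; have := congr1 (fun v : 'rV_N => v 0 j) wP; rewrite !mxE => wPj.
rewrite mulrA -wPj big_distrl /=; apply: eq_bigr => i _.
rewrite -trmx_Psym mxE PsymE.
by field; rewrite !sqrt_pi_neq0.
Qed.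

Lemma Psym_eigenvalue_lt1 m (w : 'rV_N) :
  w *m Psym = m *: w -> w != 0 -> w *m rootpi^T = 0 -> m < 1.
Proof.
move=> wP w0 w_orth; pose h i := w 0 i / sqrt_pi i.
have wE i : w 0 i = h i * sqrt_pi i by rewrite /h divfK ?sqrt_pi_neq0.
have h_harm := Psym_eigen_harmonic wP.
have [i0 wi0] : exists i, w 0 i != 0.
  apply/existsP; apply: contraR w0 => /existsPn w_eq0; apply/eqP/rowP => i.
  by rewrite mxE; apply/eqP/negbNE/w_eq0.
have m_le1 : m <= 1.
  have : `|m| <= 1.
    apply: (stochastic_eigenvalue_le1 P_stoch h_harm); exists i0.
    by rewrite /h mulf_neq0 ?invr_neq0 ?sqrt_pi_neq0.
  by rewrite ler_norml => /andP[].
rewrite lt_neqAle m_le1 andbT; apply: contra w0 => /eqP m1.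
have h_const : forall i j, h i = h j.
  by apply: (irreducible_harmonic_const P_stoch P_irr) => j; rewrite h_harm m1 mul1r.
have w_rootpi : w = h i0 *: rootpi by apply/rowP => i; rewrite !mxE wE (h_const i i0).
move: w_orth; rewrite w_rootpi -scalemxAl rootpi_mul_tr scalemx1 => /matrixP/(_ 0 0).
by rewrite mxE eqxx mulr1n mxE => ->; rewrite scale0r.
Qed.

(* Rayleigh bound for [D P D^-1 - γ1 γ1'], whose top eigenvalue is an eigenvalue of [P]
   below 1. *)
Lemma bform_Psym_orth_le s (z : 'rV_N) : sorted_eigenvalues P s -> (0 < N)%N ->
  z *m rootpi^T = 0 -> bform Psym z z <= Num.max 0 s`_1 * sqnorm z.
Proof.
move=> s_eig N_gt0 z_orth; set lam0 := Num.max 0 s`_1.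
pose B := Psym - rootpi^T *m rootpi.
have trB : B^T = B by rewrite /B linearB /= trmx_Psym trmx_mul trmxK.
have B_rootpi : B *m rootpi^T = 0.
  by rewrite /B mulmxBl Psym_rootpi -mulmxA rootpi_mul_tr mulmx1 subrr.
have [mB [[w wB w0] B_le]] := rayleigh N_gt0 trB.
have -> : bform Psym z z = bform B z z by rewrite bformBm bform_rank1 z_orth mxE mul0r subr0.
apply: le_trans (B_le z) _; rewrite ler_wpM2r ?sqnorm_ge0 //.
rewrite leNgt; apply/negP => lam0_lt.
have mB_neq0 : mB != 0 by rewrite gt_eqF // (le_lt_trans _ lam0_lt) // le_max lexx.
have w_orth : w *m rootpi^T = 0.
  have : mB *: (w *m rootpi^T) = 0 by rewrite scalemxAl -wB -mulmxA B_rootpi mulmx0.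
  by move/eqP; rewrite scaler_eq0 (negbTE mB_neq0) => /eqP.
have wP : w *m Psym = mB *: w.
  by rewrite -(subrK (rootpi^T *m rootpi) Psym) -/B mulmxDr wB mulmxA w_orth mul0mx addr0.
have mB_s := mem_sorted_eigenvalues s_eig (Psym_eigenvalue wP w0).
have one_s := mem_sorted_eigenvalues s_eig stationary_eigenvalue1.
have := sorted_ge_nth1 s_eig.2 mB_s one_s (Psym_eigenvalue_lt1 wP w0 w_orth).
move=> mB_le; have := lt_le_trans lam0_lt mB_le.
by rewrite /lam0 ltNge le_max lexx orbT.
Qed.

Variables (s : seq R) (f : 'I_N -> R) (t : R).
Hypotheses (s_eig : sorted_eigenvalues P s) (N_gt0 : (0 < N)%N).

Let lam0 := Num.max 0 s`_1.
Let G := Gt P pi f t.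
Let H := Ht pi f t lam0.
Let D := Dt f t.
Let u := rootpi *m D.

Definition Psym_majorant (l : R) : 'M[R]_N := l%:M + (1 - l) *: (gamma1 pi *m (gamma1 pi)^T).

(* Split [y] along [γ1] and its orthogonal complement, where [Psym] is bounded by [lam0]. *)
Lemma bform_Psym_le y : bform Psym y y <= bform (Psym_majorant lam0) y y.
Proof.
set g := rootpi; set a := (y *m g^T) 0 0; set z := y - a *: g.
have z_orth : z *m g^T = 0.
  by rewrite mulmxBl -scalemxAl rootpi_mul_tr scalemx1 [y *m _]mx11_scalar subrr.
have ya : (g *m y^T) 0 0 = a by rewrite -bform1 (bformC g y (tr_scalar_mx _ _)) bform1.
have yE : y = z + a *: g by rewrite subrK.
have Pzg : bform Psym z g = 0 by rewrite /bform -mulmxA Psym_rootpi z_orth mxE.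
have Pgz : bform Psym g z = 0 by rewrite bformC ?trmx_Psym.
have Pgg : bform Psym g g = 1 by rewrite /bform rootpi_Psym rootpi_mul_tr mxE.
have zg : bform 1%:M z g = 0 by rewrite bform1 z_orth mxE.
have y2 : sqnorm y = sqnorm z + a * a.
  rewrite yE !sqnorm_bform bform_expand zg (bformC g z (tr_scalar_mx _ _)) zg -!sqnorm_bform.
  by rewrite sqnorm_rootpi; ring.
have z_le := bform_Psym_orth_le s_eig N_gt0 z_orth.
rewrite /Psym_majorant bformDm bformZm bform_scalar -/(sqnorm y) gamma1E trmxK.
rewrite bform_rank1 ya -/a [in X in X <= _]yE bform_expand Pzg Pgz Pgg y2.
have lam0_ge0 : 0 <= lam0 by rewrite le_max lexx.
by have := sqnorm_ge0 z; rewrite -/lam0 in z_le *; nra.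
Qed.

Lemma Gt_congr : G = D *m Psym *m D.
Proof. by rewrite /G /Gt /Psym !mulmxA. Qed.

Lemma trmx_Gt : G^T = G.
Proof. by rewrite Gt_congr trmx_mul [(D *m _)^T]trmx_mul trmx_Psym /D trmx_Dt mulmxA. Qed.

Lemma trmx_Ht : H^T = H.
Proof.
rewrite /H /Ht !trmx_mul trmx_Dt linearD /= tr_scalar_mx linearZ /= trmx_mul trmxK.
by rewrite mulmxA.
Qed.

Lemma bform_Gt_le_Ht x : bform G x x <= bform H x x.
Proof.
rewrite Gt_congr /H /Ht -/D !bform_conj_sym ?trmx_Dt //.
exact: bform_Psym_le.
Qed.

Lemma Gt_ge0 i j : 0 <= G i j.
Proof.
rewrite Gt_congr /D /Dt mul_mx_diag mxE mul_diag_mx mxE.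
by rewrite !mulr_ge0 ?Psym_ge0 // mxE expR_ge0.
Qed.

Lemma largest_eigenvalue_Gt_gt0 z : largest_eigenvalue G z -> 0 < z.
Proof.
move=> z_top; pose x := rootpi *m Dt f (- t).
have Gx : bform G x x = 1.
  rewrite Gt_congr bform_conj_sym ?trmx_Dt // /x -mulmxA DtN_mul mulmx1.
  by rewrite /bform rootpi_Psym rootpi_mul_tr mxE.
have := bform_le_largest_eigenvalue N_gt0 trmx_Gt z_top x; rewrite Gx.
by have := sqnorm_ge0 x; nra.
Qed.

Lemma largest_eigenvalue_Gt_le_Ht zeta eta :
  largest_eigenvalue G zeta -> largest_eigenvalue H eta -> zeta <= eta.
Proof.
move=> zeta_top eta_top; have [/eigenvalueP[v vG v0] _] := zeta_top.
rewrite -(ler_pM2r (sqnorm_gt0 v0)).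
have -> : zeta * sqnorm v = bform G v v by rewrite /bform vG -scalemxAl mxE.
apply: le_trans (bform_Gt_le_Ht v) _.
exact: bform_le_largest_eigenvalue N_gt0 trmx_Ht eta_top v.
Qed.

Lemma sqr_vnorm_Dt_gamma1 : vnorm (D *m gamma1 pi) ^+ 2 = sqnorm u.
Proof.
rewrite /vnorm sqr_sqrtr ?sumr_ge0 // => [|i _]; last exact: sqr_ge0.
by rewrite sqnormE; apply: eq_bigr => i _; rewrite gamma1E /u /D -{1}(trmx_Dt f t) -trmx_mul mxE.
Qed.

Lemma sqnorm_u_gt0 : 0 < sqnorm u.
Proof.
pose i0 := Ordinal N_gt0; rewrite sqnormE; apply: (@lt_le_trans _ _ (u 0 i0 ^+ 2)).
- apply: exprn_gt0; rewrite /u /D /Dt mul_mx_diag !mxE mulr_gt0 ?sqrt_pi_gt0 ?expR_gt0 //.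
- by apply: ler_sum_term => i; exact: sqr_ge0.
Qed.

(* With [y = u D], [u H u' = lam0 |y|^2 + (1 - lam0) <y, γ1>^2] and [<y, γ1> = |u|^2]. *)
Lemma sqnorm_u_le_Ht_eigenvalue eta : largest_eigenvalue H eta -> sqnorm u <= eta.
Proof.
move=> eta_top; set c := sqnorm u; pose y := u *m D.
have y_rootpi : (y *m rootpi^T) 0 0 = c by rewrite /y /c /sqnorm /u /D trmx_mul trmx_Dt !mulmxA.
have rootpi_y : (rootpi *m y^T) 0 0 = c.
  by rewrite -bform1 (bformC rootpi y (tr_scalar_mx _ _)) bform1.
have y_ge : c ^+ 2 <= sqnorm y by rewrite -y_rootpi sqnorm_proj_le ?sqnorm_rootpi.
have Hu : bform H u u = lam0 * sqnorm y + (1 - lam0) * c ^+ 2.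
  rewrite /H /Ht -/D bform_conj_sym ?trmx_Dt // -/y bformDm bformZm bform_scalar.
  by rewrite gamma1E trmxK bform_rank1 y_rootpi rootpi_y.
have := bform_le_largest_eigenvalue N_gt0 trmx_Ht eta_top u; rewrite Hu -/c.
have lam0_ge0 : 0 <= lam0 by rewrite le_max lexx.
have := sqnorm_u_gt0; rewrite -/c => c_gt0 H_le.
by rewrite -(ler_pM2r c_gt0); nra.
Qed.

(* The tilted chain [P D_t^2] is conjugate to [D P D^-1 D_t^2], whose powers are those of [G_t]. *)
Lemma exp_moment n : (0 < n)%N ->
  \sum_(x : {ffun 'I_n.+1 -> 'I_N}) path_weight P pi x * expR (t * partial_sum f x)
  = bform (G ^+ n.-1) u u.
Proof.
case: n => // n _ /=; pose Q := P *m diag_mx (\row_i expR (t * f i)).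
have QE i j : Q i j = P i j * expR (t * f j) by rewrite /Q mul_mx_diag !mxE.
rewrite (eq_bigr (fun x : {ffun 'I_n.+2 -> 'I_N} => pi 0 (x ord0) *
  (\prod_(j < n.+1) Q (x (inord j)) (x (inord j.+1))) *
  (const_mx 1 : 'cV[R]_N) (x (inord n.+1)) 0)).
  rewrite path_sum_mulmx.
  have -> : pi = rootpi *m sqrt_diag pi.
    by apply/rowP => i; rewrite mul_mx_diag !mxE -expr2 sqr_sqrt_pi.
  have -> : const_mx 1 = inv_sqrt_diag *m rootpi^T.
    by apply/colP => i; rewrite mul_diag_mx !mxE mulVf ?sqrt_pi_neq0.
  have -> : rootpi *m sqrt_diag pi *m Q ^+ n.+1 *m (inv_sqrt_diag *m rootpi^T)
      = rootpi *m (sqrt_diag pi *m Q ^+ n.+1 *m inv_sqrt_diag) *m rootpi^T by rewrite !mulmxA.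
  rewrite (mulmx_exp_conj _ sqrt_diagK inv_sqrt_diagK).
  have -> : sqrt_diag pi *m Q *m inv_sqrt_diag = Psym *m D *m D.
    by rewrite -[RHS]mulmxA /D Dt_sqr /Q /Psym invmx_sqrt_diag -!mulmxA /inv_sqrt_diag diag_mxC.
  rewrite mulmx_expS_swap [D *m (Psym *m D)]mulmxA -Gt_congr.
  by rewrite /bform /u trmx_mul trmx_Dt [Psym]lock !mulmxA -lock rootpi_Psym.
move=> x _; rewrite /path_weight /partial_sum mxE mulr1 mulr_sumr expR_sum -mulrA -big_split /=.
by congr (_ * _); apply: eq_bigr => j _; rewrite QE.
Qed.

Lemma exp_moment_le n zeta : (0 < n)%N -> largest_eigenvalue G zeta ->
  \sum_(x : {ffun 'I_n.+1 -> 'I_N}) path_weight P pi x * expR (t * partial_sum f x)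
  <= zeta ^+ n.-1 * sqnorm u.
Proof.
move=> n_gt0 zeta_top; rewrite exp_moment //.
have G_le := bform_le_largest_eigenvalue N_gt0 trmx_Gt zeta_top.
have G_ge := bform_lower_bound_nonneg_mx Gt_ge0 G_le.
exact: (bform_exp_le trmx_Gt (largest_eigenvalue_Gt_gt0 zeta_top) G_le G_ge n.-1 u).
Qed.

Lemma tail_prob_le n K zeta : (0 < n)%N -> 0 <= t -> largest_eigenvalue G zeta ->
  chain_prob P pi (fun x : {ffun 'I_n.+1 -> 'I_N} => K <= partial_sum f x)
  <= sqnorm u * zeta ^+ n.-1 * expR (- (t * K)).
Proof.
move=> n_gt0 t_ge0 zeta_top; have [pi_ge0 _] := pi_stat; have [P_ge0 _] := P_stoch.
apply: le_trans (markov_exp_sum _ _ _ t_ge0) _.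
  by move=> x; rewrite mulr_ge0 ?prodr_ge0.
by rewrite ler_wpM2r ?expR_ge0 // mulrC exp_moment_le.
Qed.

End ReversibleChain.

Theorem proposition2 (R : realType) (N : nat) (P : 'M[R]_N) (pi : 'rV[R]_N)
  (f : 'I_N -> R) (s : seq R) (zeta eta : R -> R) (eps t : R) (n : nat) :
  stochastic P -> irreducible P -> aperiodic P ->
  stationary_distribution P pi -> reversible P pi ->
  sorted_eigenvalues P s ->
  (forall i, 0 <= f i <= 1) -> (exists i, f i = 0) -> (exists i, f i = 1) ->
  (forall u, largest_eigenvalue (Gt P pi f u) (zeta u)) ->
  (forall u, largest_eigenvalue (Ht pi f u (Num.max 0 s`_1)) (eta u)) ->
  0 < eps -> (1 <= n)%N -> 0 <= t ->
  let mu := \sum_i pi 0 i * f i in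
  let prob := chain_prob P pi
                (fun x : {ffun 'I_n.+1 -> 'I_N} =>
                   n%:R * (mu + eps) <= partial_sum f x) in
  let c := vnorm (Dt f t *m gamma1 pi) ^+ 2 in
  prob <= c * (zeta t)^-1 * expR (- (n%:R * (t * (mu + eps) - ln (zeta t))))
  /\ c * (zeta t)^-1 * expR (- (n%:R * (t * (mu + eps) - ln (zeta t))))
     <= c * (eta t)^-1 * expR (- (n%:R * (t * (mu + eps) - ln (eta t))))
  /\ prob <= expR (- (n%:R * (t * (mu + eps) - ln (eta t)))).
Proof.
move=> P_stoch P_irr _ pi_stat P_rev s_eig _ [i0 _] _ zeta_top eta_top _ n_gt0 t_ge0 mu prob c.
have N_gt0 : (0 < N)%N by apply: leq_ltn_trans (ltn_ord i0).
have cE : c = sqnorm (rootpi pi *m Dt f t) := sqr_vnorm_Dt_gamma1 pi f t.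
have c_ge0 : 0 <= c by rewrite cE sqnorm_ge0.
have zeta_gt0 := largest_eigenvalue_Gt_gt0 P_stoch P_irr pi_stat P_rev N_gt0 (zeta_top t).
have zeta_le := largest_eigenvalue_Gt_le_Ht P_stoch P_irr pi_stat P_rev s_eig N_gt0
  (zeta_top t) (eta_top t).
have eta_gt0 := lt_le_trans zeta_gt0 zeta_le.
have c_le : c <= eta t.
  by have := sqnorm_u_le_Ht_eigenvalue P_stoch P_irr pi_stat N_gt0 (eta_top t); rewrite cE.
have zeta_eta_exp : zeta t ^+ n.-1 <= eta t ^+ n.-1 by rewrite lerXn2r // nnegrE ltW.
have tail : prob <= c * zeta t ^+ n.-1 * expR (- (t * (n%:R * (mu + eps)))).
  have := tail_prob_le P_stoch P_irr pi_stat P_rev N_gt0 (n%:R * (mu + eps)) n_gt0 t_ge0.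
  by rewrite cE; apply.
rewrite !chernoff_rate // expR_rate //.
split=> //; split; first by rewrite ler_wpM2r ?expR_ge0 // ler_wpM2l.
apply: le_trans tail _; rewrite mulrC ler_wpM2l ?expR_ge0 // -(prednK n_gt0) exprS.
by apply: ler_pM => //; rewrite exprn_ge0 // ltW.
Qed.
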